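(* Let $\mathcal{N}$ be a two-level PT-net system with transitions partitioned into low-level $L$ and high-level $H$. For any high-level net system $\mathcal{N}'$ (with places disjoint from those of $\mathcal{N}$) whose set of transitions $H'$ does not intersect $L$, $\mathcal{N}\setminus H$ is weakly simulated by $(\mathcal{N}|\mathcal{N}')\setminus(H\setminus H')$, which in turn is weakly simulated by $\mathcal{N}$, where all these net systems have the same set of observable transitions $L$.
   Context: A PT-net is $N=(P,T,F)$ with $P,T$ finite disjoint and $F:(P\times T)\cup(T\times P)\to\mathbb{N}$; markings $M:P\to\mathbb{N}$; $t$ enabled at $M$ ($M[t\rangle$) iff $M(p)\ge F(p,t)$ for all $p$, firing gives $M'(p)=M(p)+F(t,p)-F(p,t)$. A PT-net system is $(N,M_0)$. $\mathcal{N}\setminus T'$ deletes the transitions of $T'$ (same places, same initial marking). For systems $\mathcal{N}_1,\mathcal{N}_2$ with disjoint place sets, $\mathcal{N}_1|\mathcal{N}_2$ has the union of places, the union of transitions (a shared transition is a single transition whose arcs to/from places of $\mathcal{N}_i$ are those of $\mathcal{N}_i$), and the union of initial markings. A high-level net system has only high-level transitions. Transitions in $L$ are observable, all others unobservable. A system $\mathcal{A}$ is weakly simulated by $\mathcal{B}$ if there is a relation $R$ between reachable markings of $\mathcal{A}$ and $\mathcal{B}$ containing the pair of initial markings such that for $(M_1,M_1')\in R$: if $M_1[l\rangle M_2$ with $l$ observable, then $M_1'$ reaches by a sequence of unobservable transitions, then $l$, then unobservable transitions, some $M_2'$ with $(M_2,M_2')\in R$; if $M_1[h\rangle M_2$ with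 $h$ unobservable, then $M_1'$ reaches by unobservable transitions some $M_2'$ with $(M_2,M_2')\in R$. *)

From mathcomp Require Import all_boot.
Set Implicit Arguments. Unset Strict Implicit. Unset Printing Implicit Defensive.

(* Transitions are drawn from a common universe [Tr] (an eqType), so that
   nets can share transitions under parallel composition.  A PT-net system
   has a finite type of places, a finite set (sequence) of transitions, the
   flow function F split into [pre] (F(p,t)) and [post] (F(t,p)), and an
   initial marking.  Only the values of [pre]/[post] on transitions of the
   net are relevant. *)
Record net (Tr : eqType) := Net {
  place : finType;
  trans : seq Tr;
  pre : place -> Tr -> nat;
  post : Tr -> place -> nat;
  m0 : place -> nat
}.

Section Nets.
Variable Tr : eqType.

Definition marking (N : net Tr) := place N -> nat.

Definition fire (N : net Tr) (M : marking N) (t : Tr) (M' : marking N) : Prop :=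
  t \in trans N /\ (forall p, pre p t <= M p) /\
  (forall p, M' p = M p + post t p - pre p t).

Inductive reach (N : net Tr) : marking N -> Prop :=
| reach0 : reach (@m0 _ N)
| reachS M t M' : reach M -> fire M t M' -> reach M'.

Inductive taus (N : net Tr) (obs : pred Tr) : marking N -> marking N -> Prop :=
| taus0 M : taus obs M M
| tausS M t M' M'' : ~~ obs t -> fire M t M' -> taus obs M' M'' -> taus obs M M''.

Definition restrict (N : net Tr) (D : pred Tr) : net Tr :=
  @Net Tr (place N) [seq t <- trans N | ~~ D t] (@pre _ N) (@post _ N) (@m0 _ N).

(* N1 | N2 : disjoint union of places (sum type), union of transitions,
   shared transitions merged; arcs to/from places of Ni are those of Ni. *)
Definition compose (N1 N2 : net Tr) : net Tr :=
  @Net Tr (place N1 + place N2)%type (trans N1 ++ trans N2)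
    (fun p t => match p with
                | inl p1 => if t \in trans N1 then pre p1 t else 0
                | inr p2 => if t \in trans N2 then pre p2 t else 0 end)
    (fun t p => match p with
                | inl p1 => if t \in trans N1 then post t p1 else 0
                | inr p2 => if t \in trans N2 then post t p2 else 0 end)
    (fun p => match p with inl p1 => m0 p1 | inr p2 => m0 p2 end).

Definition weakly_simulated (A B : net Tr) (obs : pred Tr) : Prop :=
  exists R : marking A -> marking B -> Prop,
    (forall M M', R M M' -> reach M /\ reach M') /\
    R (@m0 _ A) (@m0 _ B) /\
    forall M1 M1', R M1 M1' ->
      (forall l M2, obs l -> fire M1 l M2 ->
         exists M2', (exists X Y, taus obs M1' X /\ fire X l Y /\ taus obs Y M2')
                     /\ R M2 M2') /\
      (forall h M2, ~~ obs h -> fire M1 h M2 ->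
         exists M2', taus obs M1' M2' /\ R M2 M2').

(* Two-level nets: [lowp] is the global classification of transitions as
   low-level; the transitions of N split into L (low) and H (high). *)
Definition Lset (lowp : pred Tr) (N : net Tr) : pred Tr :=
  [pred t | (t \in trans N) && lowp t].
Definition Hset (lowp : pred Tr) (N : net Tr) : pred Tr :=
  [pred t | (t \in trans N) && ~~ lowp t].

End Nets.

From mathcomp Require Import all_boot.

Set Implicit Arguments.
Unset Strict Implicit.
Unset Printing Implicit Defensive.

(* Both simulations are step-for-step: a firing of the simulated system is
   either matched by the same transition in the other system or, for a
   transition of the high-level system N' alone, by doing nothing, which is
   allowed since such a transition is unobservable. The matching relations
   compare the markings on the places of N, keeping those of N' at their
   initial values in the first simulation. *)

Section Simulation.
Variables (Tr : eqType) (A B : net Tr) (obs : pred Tr).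
Variable R : marking A -> marking B -> Prop.
Hypothesis R_m0 : R (@m0 _ A) (@m0 _ B).
Hypothesis R_fire : forall M1 M1' t M2, R M1 M1' -> fire M1 t M2 ->
  (exists2 M2', fire M1' t M2' & R M2 M2') \/ (~~ obs t /\ R M2 M1').

Lemma weakly_simulated_by_steps : weakly_simulated A B obs.
Proof.
exists (fun M M' => [/\ reach M, reach M' & R M M']).
split; first by move=> M M' [].
split; first by split; [exact: reach0 | exact: reach0 | exact: R_m0].
move=> M1 M1' [r1 r1' RM1]; split=> [l M2 obs_l fire1 | h M2 obs_h fire1].
- have r2 := reachS r1 fire1.
  case: (R_fire RM1 fire1) => [[M2' fire1' RM2] | [] ]; last by rewrite obs_l.
  exists M2'; split; last by split=> //; exact: reachS r1' fire1'.
  by exists M1', M2'; split; [exact: taus0 | split; [exact: fire1' | exact: taus0]].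
- have r2 := reachS r1 fire1.
  case: (R_fire RM1 fire1) => [[M2' fire1' RM2] | [_ RM2]].
  + exists M2'; split; first exact: tausS obs_h fire1' (taus0 _ _).
    by split=> //; exact: reachS r1' fire1'.
  + by exists M1'; split; [exact: taus0 | split].
Qed.

End Simulation.

Section Firing.
Variable Tr : eqType.

Lemma fire_restrict (N : net Tr) (D : pred Tr) (M M' : marking N) t :
  @fire _ (restrict N D) M t M' <-> ~~ D t /\ fire M t M'.
Proof.
rewrite /fire /= mem_filter.
by split=> [[/andP[-> ->] fM] | [-> [-> fM]]].
Qed.

Lemma eq_fire (N : net Tr) (M1 M2 M' : marking N) t :
  M1 =1 M2 -> fire M1 t M' -> fire M2 t M'.
Proof.
move=> eqM [tN [en ef]]; split=> //.
by split=> p; [rewrite -eqM; exact: en | rewrite ef eqM].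
Qed.

Variables N1 N2 : net Tr.

Definition pair_marking (M1 : marking N1) (M2 : marking N2) : marking (compose N1 N2) :=
  fun x => match x with inl p => M1 p | inr q => M2 q end.

Definition lmarking (M : marking (compose N1 N2)) : marking N1 := fun p => M (inl p).

Lemma fire_compose_pair (M1 M1' : marking N1) (M2 : marking N2) t :
  t \notin trans N2 -> fire M1 t M1' ->
  fire (pair_marking M1 M2) t (pair_marking M1' M2).
Proof.
move=> /negbTE tN2 [tN1 [en ef]]; split; first by rewrite mem_cat tN1.
by split; case=> [p|q] /=; rewrite ?tN1 ?tN2 ?ef ?addn0 ?subn0.
Qed.

Lemma fire_compose_lmarking (M M' : marking (compose N1 N2)) t :
  t \in trans N1 -> fire M t M' -> fire (lmarking M) t (lmarking M').
Proof.
move=> tN1 [_ [en ef]]; split=> //; split=> p.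
  by have := en (inl p); rewrite /= tN1.
by rewrite /lmarking ef /= tN1.
Qed.

Lemma fire_compose_lmarking_idle (M M' : marking (compose N1 N2)) t :
  t \notin trans N1 -> fire M t M' -> lmarking M' =1 lmarking M.
Proof.
by move=> /negbTE tN1 [_ [_ ef]] p; rewrite /lmarking ef /= tN1 addn0 subn0.
Qed.

End Firing.

Section Composition.
Variables (Tr : eqType) (N N' : net Tr) (obs : pred Tr).

Lemma restrict_simulated_by_compose (D D' : pred Tr) :
  (forall t, t \in trans N -> ~~ D t -> ~~ D' t && (t \notin trans N')) ->
  weakly_simulated (restrict N D) (restrict (compose N N') D') obs.
Proof.
move=> keep.
apply: (@weakly_simulated_by_steps _ (restrict N D) (restrict (compose N N') D') _
  (fun (M : marking N) (M' : marking (compose N N')) => M' = pair_marking M (@m0 _ N')))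
  => // M1 _ t M2 -> fire1.
have /fire_restrict[nDt fireN] := fire1.
have /andP[nD't tN'] := keep t (proj1 fireN) nDt.
left; exists (pair_marking M2 (@m0 _ N')) => //.
by apply/fire_restrict; split=> //; exact: fire_compose_pair.
Qed.

Lemma compose_simulated_by_left (D : pred Tr) :
  (forall t, t \in trans N' -> t \notin trans N -> ~~ obs t) ->
  weakly_simulated (restrict (compose N N') D) N obs.
Proof.
move=> unobs.
apply: (@weakly_simulated_by_steps _ (restrict (compose N N') D) N _
  (fun (M' : marking (compose N N')) (M : marking N) => M =1 lmarking M'))
  => // M1' M1 t M2' eqM fire1.
have /fire_restrict[_ fireNN'] := fire1.
case tN: (t \in trans N).
  left; exists (lmarking M2') => //.
  by apply: eq_fire (fire_compose_lmarking tN fireNN'); move=> p; rewrite eqM.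
right; split; last by move=> p; rewrite eqM (fire_compose_lmarking_idle _ fireNN') ?tN.
apply: unobs; last by rewrite tN.
by case: fireNN'; rewrite mem_cat tN.
Qed.

End Composition.

Theorem proposition2 (Tr : eqType) (lowp : pred Tr) (N N' : net Tr)
  (high_N' : forall t, t \in trans N' -> ~~ lowp t)
  (disj : forall t, t \in trans N' -> ~~ Lset lowp N t) :
  let L := Lset lowp N in
  let H := Hset lowp N in
  let HmH' := [pred t | H t && (t \notin trans N')] in
  weakly_simulated (restrict N H) (restrict (compose N N') HmH') L /\
  weakly_simulated (restrict (compose N N') HmH') N L.
Proof.
move=> L H HmH'; split.
- apply: restrict_simulated_by_compose => t tN.
  rewrite /HmH' /H /Hset !inE tN /= negbK => lowt; rewrite lowt /=.
  by apply/negP=> tN'; move: (disj t tN'); rewrite /Lset inE tN lowt.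
- apply: compose_simulated_by_left => t _ tN.
  by rewrite /L /Lset !inE (negbTE tN).
Qed.
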